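(* Let $n\ge 2$ be an integer and define $\tau_i=-2\sin\frac{i\pi}{2n}$ for $0\le i\le n$. Let $S\in\mathbb{R}^{(n-1)\times(n-1)}$ be the matrix with columns $\bm s_1,\dots,\bm s_{n-1}$, where $\bm s_j=\big(\sin\frac{j\pi}{n},\sin\frac{2j\pi}{n},\dots,\sin\frac{(n-1)j\pi}{n}\big)^{\mathsf T}$. Let $C\in\mathbb{R}^{n\times n}$ be the matrix with columns $\bm c_0,\dots,\bm c_{n-1}$, where $\bm c_j=\nu_j\big(\cos\frac{j\pi}{2n},\cos\frac{3j\pi}{2n},\dots,\cos\frac{(2n-1)j\pi}{2n}\big)^{\mathsf T}$, with $\nu_0=\frac{1}{\sqrt2}$ and $\nu_j=1$ for $1\le j\le n-1$. Let $B\in\mathbb{R}^{(n-1)\times n}$ be the matrix with entries $B_{i,i}=-1$, $B_{i,i+1}=1$ for $1\le i\le n-1$ and all other entries $0$. Then $$S^{-1}BC=SBC^{-\mathsf T}=\Gamma,$$ where $\Gamma=[\bm 0,\Lambda]\in\mathbb{R}^{(n-1)\times n}$, $\bm 0$ is the zero column of length $n-1$, and $\Lambda=\mathrm{diag}(\tau_1,\dots,\tau_{n-1})$.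
   Context: $C^{-\mathsf T}$ denotes the inverse of the transpose of $C$. *)

From HB Require Import structures.
From mathcomp Require Import all_boot all_order all_algebra.
From mathcomp Require Import all_classical all_reals all_analysis.
Set Implicit Arguments. Unset Strict Implicit. Unset Printing Implicit Defensive.
Import Order.TTheory GRing.Theory Num.Theory.
Local Open Scope ring_scope.

Section Defs.
Variable R : realType.

Definition tau (n i : nat) : R := - 2 * sin (i%:R * pi / (2 * n%:R)).

(* Indices are 0-based: row/column k of the Rocq matrix is index k+1 of the paper
   for S and B (rows), and index k for the columns of C (c_0 .. c_{n-1}). *)

Definition Smx (n : nat) : 'M[R]_(n.-1) :=
  \matrix_(i, j) sin ((i.+1)%:R * (j.+1)%:R * pi / n%:R).

Definition nu (j : nat) : R := if j == 0%N then 1 / Num.sqrt 2 else 1.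

Definition Cmx (n : nat) : 'M[R]_n :=
  \matrix_(i, j) (nu j * cos ((2 * i + 1)%N%:R * (j : nat)%:R * pi / (2 * n%:R))).

Definition Bmx (n : nat) : 'M[R]_(n.-1, n) :=
  \matrix_(i, j) (if (j : nat) == i then -1 else if (j : nat) == i.+1 then 1 else 0).

Definition Gamma (n : nat) : 'M[R]_(n.-1, n) :=
  \matrix_(i, j) (if (j : nat) == i.+1 then tau n j else 0).

End Defs.

From HB Require Import structures.
From mathcomp Require Import all_boot all_order all_algebra.
From mathcomp Require Import all_classical all_reals all_analysis.
From mathcomp Require Import ring zify.
Set Implicit Arguments. Unset Strict Implicit. Unset Printing Implicit Defensive.
Import Order.TTheory GRing.Theory Num.Theory.
Local Open Scope ring_scope.

(* S^2 = (n/2) I and C^T C = (n/2) I are the discrete orthogonality relations of the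
   sine and cosine (DCT-II) bases: by product-to-sum they reduce to the sums
   sum_(k<n) cos (d k pi / n) and sum_(k<n) cos (d (2k+1) pi / (2n)) with d < 2n, which
   the telescoping identity 2 sin x sum_(k<N) cos (a + 2kx) = sin (a + (2N-1)x) - sin (a - x)
   evaluates to n for d = 0 and to the parity of d, resp. 0, otherwise.  Hence
   S^-1 = (2/n) S and C^-T = (2/n) C, and the theorem follows from the intertwining
   relations B C = S Gamma and S B = Gamma C^T, which are entrywise instances of
   cos (u + v) - cos (u - v) = -2 sin u sin v and sin (u - v) - sin (u + v) = -2 cos u sin v. *)

Lemma invmx_eq_scale (F : fieldType) k (A B : 'M[F]_k) (c : F) :
  c != 0 -> A *m B = c%:M -> invmx A = c^-1 *: B.
Proof.
move=> c_neq0 AB.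
have AB1 : A *m (c^-1 *: B) = 1%:M by rewrite -scalemxAr AB scale_scalar_mx mulVf.
have [A_unit _] := mulmx1_unit AB1.
by rewrite -[RHS](mulKmx A_unit) AB1 mulmx1.
Qed.

Section Trigonometry.
Variable R : realType.
Implicit Types x y : R.

Lemma cosB_sub_cosD x y : cos (x - y) - cos (x + y) = 2 * sin x * sin y.
Proof. by rewrite cosB cosD; ring. Qed.

Lemma cosB_add_cosD x y : cos (x - y) + cos (x + y) = 2 * cos x * cos y.
Proof. by rewrite cosB cosD; ring. Qed.

Lemma sinB_sub_sinD x y : sin (x - y) - sin (x + y) = - 2 * cos x * sin y.
Proof. by rewrite sinB sinD; ring. Qed.

Lemma sin_natrpi (m : nat) : sin (m%:R * pi) = 0 :> R.
Proof.
elim: m => [|m IHm]; first by rewrite mul0r sin0.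
by rewrite -natr1 mulrDl mul1r sinDpi IHm oppr0.
Qed.

Lemma cos_natrpi (m : nat) : cos (m%:R * pi) = (-1) ^+ m :> R.
Proof.
elim: m => [|m IHm]; first by rewrite mul0r cos0.
by rewrite -natr1 mulrDl mul1r cosDpi IHm exprS mulN1r.
Qed.

Lemma cos_distn (p q : nat) x :
  cos (`|p - q|%N%:R * x) = cos ((p%:R - q%:R) * x).
Proof.
case: (leqP p q) => [le_pq | /ltnW le_qp].
  by rewrite distnEr // natrB // -cosN -mulNr opprB.
by rewrite distnEl // natrB.
Qed.

Lemma sin_natrpi_div_gt0 (d N : nat) :
  (0 < d < N)%N -> 0 < sin (d%:R * pi / N%:R) :> R.
Proof.
case/andP=> d_gt0 lt_dN; have N_gt0 : (0 < N)%N by apply: leq_trans lt_dN.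
have pi_gt0 := pi_gt0 R.
apply: sin_gt0_pi; apply/andP; split.
  by rewrite divr_gt0 ?mulr_gt0 ?ltr0n.
by rewrite ltr_pdivrMr ?ltr0n // mulrC ltr_pM2l // ltr_nat.
Qed.

Lemma sum_cos_arith_mul_sin (N : nat) a x :
  (\sum_(k < N) cos (a + 2 * k%:R * x)) * (2 * sin x) =
  sin (a + (2 * N%:R - 1) * x) - sin (a - x).
Proof.
pose u k := sin (a + (2 * k%:R - 1) * x).
have -> : sin (a - x) = u 0%N by rewrite /u mulr0 sub0r mulN1r.
rewrite -/(u N) -(telescope_sumr u (leq0n N)) big_mkord mulr_suml.
apply: eq_bigr => k _; rewrite /u.
have -> : a + (2 * k.+1%:R - 1) * x = a + 2 * k%:R * x + x.
  by rewrite -natr1; ring.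
have -> : a + (2 * k%:R - 1) * x = a + 2 * k%:R * x - x by ring.
by rewrite sinD sinB; ring.
Qed.

End Trigonometry.

Lemma odd_distn (p q : nat) : odd `|p - q| = odd (p + q).
Proof.
case: (leqP p q) => [le_pq | /ltnW le_qp].
  by rewrite distnEr // oddB // oddD addbC.
by rewrite distnEl // oddB // oddD.
Qed.

Section DiscreteOrthogonality.
Variable R : realType.

Lemma sum_cos_natrpi (n d : nat) : (d < 2 * n)%N ->
  \sum_(k < n) cos (d%:R * (k%:R * pi / n%:R)) =
  (if d == 0%N then n%:R else (odd d)%:R) :> R.
Proof.
move=> lt_d2n; case: (posnP d) => [-> | d_gt0] /=.
  by under eq_bigr do rewrite mul0r cos0; rewrite sumr_const card_ord.
have n_neq0 : n%:R != 0 :> R by rewrite pnatr_eq0; lia.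
set x : R := d%:R * pi / (2 * n%:R).
have sinx_gt0 : 0 < sin x.
  by rewrite /x -natrM; apply: sin_natrpi_div_gt0; rewrite d_gt0.
apply: (mulIf (x := 2 * sin x)); first by rewrite mulf_neq0 ?gt_eqF.
transitivity ((\sum_(k < n) cos (0 + 2 * k%:R * x)) * (2 * sin x)).
  by congr (_ * _); apply: eq_bigr => k _; congr cos; rewrite /x; field.
rewrite sum_cos_arith_mul_sin add0r sub0r sinN opprK.
have -> : (2 * n%:R - 1) * x = d%:R * pi - x by rewrite /x; field.
by rewrite sinB sin_natrpi cos_natrpi -signr_odd; case: (odd d) => /=; ring.
Qed.

Lemma sum_cos_odd_natrpi (n d : nat) : (d < 2 * n)%N ->
  \sum_(k < n) cos (d%:R * ((2 * k + 1)%N%:R * pi / (2 * n%:R))) =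
  (if d == 0%N then n%:R else 0) :> R.
Proof.
move=> lt_d2n; case: (posnP d) => [-> | d_gt0] /=.
  by under eq_bigr do rewrite mul0r cos0; rewrite sumr_const card_ord.
have n_neq0 : n%:R != 0 :> R by rewrite pnatr_eq0; lia.
set x : R := d%:R * pi / (2 * n%:R).
have sinx_gt0 : 0 < sin x.
  by rewrite /x -natrM; apply: sin_natrpi_div_gt0; rewrite d_gt0.
apply: (mulIf (x := 2 * sin x)); first by rewrite mulf_neq0 ?gt_eqF.
transitivity ((\sum_(k < n) cos (x + 2 * k%:R * x)) * (2 * sin x)).
  by congr (_ * _); apply: eq_bigr => k _; congr cos; rewrite /x natrD natrM; field.
rewrite sum_cos_arith_mul_sin subrr sin0 subr0 mul0r.
have -> : x + (2 * n%:R - 1) * x = d%:R * pi by rewrite /x; field.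
exact: sin_natrpi.
Qed.

Lemma sum_sin_mul_sin (n p q : nat) : (0 < p < n)%N -> (0 < q < n)%N ->
  \sum_(k < n) sin (p%:R * k%:R * pi / n%:R) * sin (q%:R * k%:R * pi / n%:R) =
  (n%:R / 2) *+ (p == q) :> R.
Proof.
move=> /andP[p_gt0 lt_pn] /andP[q_gt0 lt_qn].
have prod_to_sum (k : nat) :
    sin (p%:R * k%:R * pi / n%:R) * sin (q%:R * k%:R * pi / n%:R) =
    (cos (`|p - q|%N%:R * (k%:R * pi / n%:R)) -
     cos ((p + q)%N%:R * (k%:R * pi / n%:R))) / 2 :> R.
  rewrite cos_distn (natrD _ p q).
  set u := p%:R * k%:R * pi / n%:R; set v := q%:R * k%:R * pi / n%:R.
  have -> : (p%:R - q%:R) * (k%:R * pi / n%:R) = u - v by rewrite /u /v; ring.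
  have -> : (p%:R + q%:R) * (k%:R * pi / n%:R) = u + v by rewrite /u /v; ring.
  by rewrite cosB_sub_cosD; field.
under eq_bigr do rewrite prod_to_sum.
rewrite -mulr_suml sumrB !sum_cos_natrpi; try lia.
rewrite distn_eq0 (_ : (p + q == 0)%N = false); last by lia.
case: eqP => [<- | _]; first by rewrite addnn odd_double subr0.
by rewrite odd_distn subrr mul0r.
Qed.

Lemma nu0_sqr : nu R 0 * nu R 0 = 2^-1.
Proof.
by rewrite /nu eqxx -expr2 expr_div_n sqr_sqrtr ?ler0n // expr1n div1r.
Qed.

Lemma sum_cos_mul_cos (n p q : nat) : (p < n)%N -> (q < n)%N ->
  \sum_(k < n) (nu R p * cos ((2 * k + 1)%N%:R * p%:R * pi / (2 * n%:R))) *
               (nu R q * cos ((2 * k + 1)%N%:R * q%:R * pi / (2 * n%:R))) =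
  (n%:R / 2) *+ (p == q) :> R.
Proof.
move=> lt_pn lt_qn.
have prod_to_sum (k : nat) :
    (nu R p * cos ((2 * k + 1)%N%:R * p%:R * pi / (2 * n%:R))) *
    (nu R q * cos ((2 * k + 1)%N%:R * q%:R * pi / (2 * n%:R))) =
    nu R p * nu R q / 2 *
    (cos (`|p - q|%N%:R * ((2 * k + 1)%N%:R * pi / (2 * n%:R))) +
     cos ((p + q)%N%:R * ((2 * k + 1)%N%:R * pi / (2 * n%:R)))).
  rewrite cos_distn (natrD _ p q).
  set u := (2 * k + 1)%N%:R * p%:R * pi / (2 * n%:R).
  set v := (2 * k + 1)%N%:R * q%:R * pi / (2 * n%:R).
  have -> : (p%:R - q%:R) * ((2 * k + 1)%N%:R * pi / (2 * n%:R)) = u - v.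
    by rewrite /u /v; ring.
  have -> : (p%:R + q%:R) * ((2 * k + 1)%N%:R * pi / (2 * n%:R)) = u + v.
    by rewrite /u /v; ring.
  by rewrite cosB_add_cosD; field.
under eq_bigr do rewrite prod_to_sum.
rewrite -mulr_sumr big_split /= !sum_cos_odd_natrpi; try lia.
rewrite distn_eq0; case: eqP => [<- | /eqP neq_pq]; last first.
  by rewrite (_ : (p + q == 0)%N = false) ?addr0 ?mulr0 //; lia.
rewrite mulr1n addnn double_eq0; case: eqP => [-> | /eqP p_neq0].
  by rewrite nu0_sqr; field.
by rewrite /nu (negbTE p_neq0); field.
Qed.

End DiscreteOrthogonality.

Section Matrices.
Variable R : realType.

Lemma sum_nat_delta (N j : nat) (f : nat -> R) : (j < N)%N ->
  \sum_(k < N) ((k : nat) == j)%:R * f k = f j.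
Proof.
move=> lt_jN; transitivity (\sum_(k < N | k == j :> nat) f k).
  by rewrite [RHS]big_mkcond; apply: eq_bigr => k _; case: eqP; rewrite ?mul1r ?mul0r.
by rewrite big_ord1_eq lt_jN.
Qed.

Lemma BmxE n (i : 'I_n.-1) (j : 'I_n) :
  Bmx R n i j = ((j : nat) == i.+1)%:R - ((j : nat) == i)%:R.
Proof.
rewrite mxE; case: (eqVneq (j : nat) i) => [-> | _].
  by rewrite (ltn_eqF (ltnSn i)) sub0r.
by case: eqP; rewrite ?subr0 ?subrr.
Qed.

Lemma GammaE n (i : 'I_n.-1) (j : 'I_n) :
  Gamma R n i j = ((j : nat) == i.+1)%:R * tau R n j.
Proof. by rewrite mxE; case: eqP; rewrite ?mul1r ?mul0r. Qed.

Lemma tau0 n : tau R n 0 = 0.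
Proof. by rewrite /tau !mul0r sin0 mulr0. Qed.

Lemma sum_Bmx_row m (i : 'I_m) (g : nat -> R) :
  \sum_(k < m.+1) Bmx R m.+1 i k * g k = g i.+1 - g i.
Proof.
under eq_bigr do rewrite BmxE mulrBl.
by rewrite sumrB !sum_nat_delta // ltnS ?ltn_ord // ltnW.
Qed.

Lemma sum_Bmx_col m (j : 'I_m.+1) (f : nat -> R) : f 0%N = 0 -> f m.+1 = 0 ->
  \sum_(k < m) f k.+1 * Bmx R m.+1 k j = f j - f j.+1.
Proof.
move=> f0 fm; under eq_bigr do rewrite BmxE mulrBr.
rewrite sumrB; congr (_ - _).
  rewrite -(sum_nat_delta f (ltn_ord j)) big_ord_recl /= f0 mulr0 add0r.
  by apply: eq_bigr => k _; rewrite mulrC eq_sym.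
rewrite -(sum_nat_delta (fun k => f k.+1) (ltn_ord j)) big_ord_recr /= fm mulr0 addr0.
by apply: eq_bigr => k _; rewrite mulrC eq_sym.
Qed.

Lemma sum_Gamma_row m (i : 'I_m) (g : nat -> R) :
  \sum_(k < m.+1) Gamma R m.+1 i k * g k = tau R m.+1 i.+1 * g i.+1.
Proof.
under eq_bigr do rewrite GammaE -mulrA.
by rewrite (sum_nat_delta (fun k => tau R m.+1 k * g k)) // ltnS.
Qed.

(* For [j = 0] the right-hand side is [f 0 * tau 0 = 0], as it should be. *)
Lemma sum_Gamma_col m (j : 'I_m.+1) (f : nat -> R) :
  \sum_(k < m) f k * Gamma R m.+1 k j = f j.-1 * tau R m.+1 j.
Proof.
under eq_bigr do rewrite GammaE.
case: j => -[|l] lt_lm /=.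
  by rewrite tau0 !mulr0 big1 // => k _; rewrite !mulr0.
under eq_bigr do rewrite eqSS eq_sym mulrCA.
by rewrite (sum_nat_delta (fun k => f k * tau R m.+1 l.+1)).
Qed.

Lemma Smx_mulmx_Smx n : Smx R n *m Smx R n = (n%:R / 2)%:M.
Proof.
case: n => [|m]; first by apply/matrixP => -[].
apply/matrixP => a b; rewrite mxE.
transitivity (\sum_(k < m.+1) sin (a.+1%:R * k%:R * (pi : R) / m.+1%:R) *
                              sin (b.+1%:R * k%:R * pi / m.+1%:R)).
  rewrite big_ord_recl /= !mulr0 !mul0r sin0 mul0r add0r.
  by apply: eq_bigr => k _; rewrite !mxE /bump add1n; congr (_ * sin _); ring.
by rewrite sum_sin_mul_sin /= ?ltnS ?ltn_ord // mxE.
Qed.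

Lemma trCmx_mulmx_Cmx n : (Cmx R n)^T *m Cmx R n = (n%:R / 2)%:M.
Proof.
apply/matrixP => a b; rewrite !mxE; under eq_bigr do rewrite !mxE.
exact: sum_cos_mul_cos.
Qed.

Lemma Bmx_mulmx_Cmx n : Bmx R n *m Cmx R n = Smx R n *m Gamma R n.
Proof.
case: n => [|m]; first by apply/matrixP => -[].
apply/matrixP => i j; rewrite !mxE.
under eq_bigr do rewrite [Cmx _ _ _ _]mxE.
under [RHS]eq_bigr do rewrite [Smx _ _ _ _]mxE.
rewrite (@sum_Bmx_row m i (fun k =>
  nu R j * cos ((2 * k + 1)%N%:R * j%:R * pi / (2 * m.+1%:R)))).
rewrite (sum_Gamma_col j (fun k => sin (i.+1%:R * k.+1%:R * pi / m.+1%:R))).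
case: j => -[|l] lt_lm /=.
  by rewrite tau0 !mulr0 !mul0r subrr.
rewrite /nu /tau /= !mul1r.
have n_neq0 : m.+1%:R != 0 :> R by rewrite pnatr_eq0.
set u : R := i.+1%:R * l.+1%:R * pi / m.+1%:R.
set v : R := l.+1%:R * pi / (2 * m.+1%:R).
have -> : (2 * i.+1 + 1)%N%:R * l.+1%:R * pi / (2 * m.+1%:R) = u + v.
  by rewrite /u /v natrD natrM; field.
have -> : (2 * i + 1)%N%:R * l.+1%:R * pi / (2 * m.+1%:R) = u - v.
  by rewrite /u /v natrD natrM; field.
by rewrite -opprB cosB_sub_cosD; ring.
Qed.

Lemma Smx_mulmx_Bmx n : Smx R n *m Bmx R n = Gamma R n *m (Cmx R n)^T.
Proof.
case: n => [|m]; first by apply/matrixP => -[].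
have n_neq0 : m.+1%:R != 0 :> R by rewrite pnatr_eq0.
apply/matrixP => i j; rewrite !mxE.
under eq_bigr do rewrite [Smx _ _ _ _]mxE.
under [RHS]eq_bigr do rewrite [_^T _ _]mxE [Cmx _ _ _ _]mxE.
rewrite (@sum_Bmx_col _ j (fun k => sin (i.+1%:R * k%:R * pi / m.+1%:R))); last 2 first.
- by rewrite mulr0 !mul0r sin0.
- by rewrite (_ : _ / _ = i.+1%:R * pi) ?sin_natrpi //; field.
rewrite (@sum_Gamma_row m i (fun k =>
  nu R k * cos ((2 * j + 1)%N%:R * k%:R * pi / (2 * m.+1%:R)))).
rewrite /nu /tau /= mul1r.
set u : R := (2 * j + 1)%N%:R * i.+1%:R * pi / (2 * m.+1%:R).
set v : R := i.+1%:R * pi / (2 * m.+1%:R).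
have -> : i.+1%:R * j%:R * pi / m.+1%:R = u - v.
  by rewrite /u /v natrD natrM; field.
have -> : i.+1%:R * j.+1%:R * pi / m.+1%:R = u + v.
  by rewrite /u /v natrD natrM; field.
by rewrite sinB_sub_sinD; ring.
Qed.

End Matrices.

Theorem lemma2p1 (R : realType) (n : nat) (hn : (2 <= n)%N) :
  invmx (Smx R n) *m Bmx R n *m Cmx R n = Gamma R n /\
  Smx R n *m Bmx R n *m invmx (Cmx R n)^T = Gamma R n.
Proof.
have c_neq0 : n%:R / 2 != 0 :> R.
  by rewrite mulf_neq0 ?invr_eq0 ?pnatr_eq0 //; lia.
split.
  rewrite (invmx_eq_scale c_neq0 (Smx_mulmx_Smx R n)) -mulmxA Bmx_mulmx_Cmx.
  by rewrite -scalemxAl mulmxA Smx_mulmx_Smx mul_scalar_mx scalerA mulVf ?scale1r.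
rewrite (invmx_eq_scale c_neq0 (trCmx_mulmx_Cmx R n)) Smx_mulmx_Bmx.
by rewrite -scalemxAr -mulmxA trCmx_mulmx_Cmx mul_mx_scalar scalerA mulVf ?scale1r.
Qed.
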